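(* For $n>2$, let $Q=G_{n+1}^2/N$ where $N$ is the normal subgroup generated by all elements $a_{i(n+1)}a_{j(n+1)}a_{i(n+1)}^{-1}a_{j(n+1)}^{-1}$, $i,j\in\{1,\dots,n\}$. Then the assignment $\kappa(a_{ij})=a_{ij}$ for $\{i,j\}\subset\{1,\dots,n\}$ and $\kappa(\tau_i)=a_{i(n+1)}$ extends to a well-defined group homomorphism $\kappa\colon G_{n,\mathcal{D}}^2\to Q$.
   Context: $G_{N}^2$ is the group with generators $a_{ij}=a_{\{i,j\}}$ for $2$-element subsets $\{i,j\}\subset\{1,\dots,N\}$ and relations $a_{ij}^2=1$; $a_{ij}a_{kl}=a_{kl}a_{ij}$ for distinct $i,j,k,l$; $a_{ij}a_{ik}a_{jk}=a_{jk}a_{ik}a_{ij}$ for distinct $i,j,k$. $G_{n,\mathcal{D}}^2$ has generators $a_{ij}$ ($\{i,j\}\subset\{1,\dots,n\}$) and $\tau_i$ ($1\le i\le n$) with relations: $a_{ij}^2=1$; $a_{ij}a_{kl}=a_{kl}a_{ij}$ for distinct $i,j,k,l$; $a_{ij}a_{ik}a_{jk}=a_{jk}a_{ik}a_{ij}$ for distinct $i,j,k$; $\tau_i^2=1$; $\tau_i\tau_j=\tau_j\tau_i$; $\tau_i\tau_ja_{ij}\tau_j\tau_i=a_{ij}$; $a_{ij}\tau_k=\tau_ka_{ij}$ for distinct $i,j,k$. *)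

(* Groups given by presentations, modelled as words in the
   generators and their inverses modulo the congruence generated by free
   cancellation and the relators (i.e. modulo the normal closure of the relators). *)
From mathcomp Require Import all_boot.
Set Implicit Arguments. Unset Strict Implicit. Unset Printing Implicit Defensive.

(* a letter (x, b): generator x if b = false, its inverse x^-1 if b = true *)
Definition word (X : Type) := seq (X * bool).

Definition inv_word (X : Type) (w : word X) : word X :=
  rev (map (fun p => (p.1, ~~ p.2)) w).

Definition rel_of (X : Type) (l r : word X) : word X := l ++ inv_word r.

Inductive weq (X : Type) (R : word X -> Prop) : word X -> word X -> Prop :=
| weq_refl w : weq R w w
| weq_sym w1 w2 : weq R w1 w2 -> weq R w2 w1
| weq_trans w1 w2 w3 : weq R w1 w2 -> weq R w2 w3 -> weq R w1 w3
| weq_free u x b v : weq R (u ++ [:: (x, b); (x, ~~ b)] ++ v) (u ++ v)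
| weq_rel u r v : R r -> weq R (u ++ r ++ v) (u ++ v).

(* generators a_{ij} of G_N^2: 2-element subsets of {1..N} (here 'I_N) *)
Definition gen2 (N : nat) := {S : {set 'I_N} | #|S| == 2}.

Definition RG (N : nat) (w : word (gen2 N)) : Prop :=
  (exists g : gen2 N, w = [:: (g, false); (g, false)])
  \/ (exists (i j k l : 'I_N) (g h : gen2 N),
        [/\ uniq [:: i; j; k; l], val g = [set i; j], val h = [set k; l] &
            w = rel_of [:: (g, false); (h, false)] [:: (h, false); (g, false)]])
  \/ (exists (i j k : 'I_N) (g1 g2 g3 : gen2 N),
        [/\ uniq [:: i; j; k], val g1 = [set i; j], val g2 = [set i; k],
            val g3 = [set j; k] &
            w = rel_of [:: (g1, false); (g2, false); (g3, false)]
                       [:: (g3, false); (g2, false); (g1, false)]]).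

(* the normal generators of N in G_{n+1}^2 (last index n+1 is ord_max) *)
Definition RN (n : nat) (w : word (gen2 n.+1)) : Prop :=
  exists (i j : 'I_n) (g h : gen2 n.+1),
    [/\ val g = [set widen_ord (leqnSn n) i; ord_max],
        val h = [set widen_ord (leqnSn n) j; ord_max] &
        w = [:: (g, false); (h, false); (g, true); (h, true)]].

Definition RQ (n : nat) (w : word (gen2 n.+1)) : Prop := @RG n.+1 w \/ RN w.

(* generators of G_{n,D}^2 : inl = a_{ij}, inr i = tau_i *)
Definition genD (n : nat) := (gen2 n + 'I_n)%type.

Definition RGD (n : nat) (w : word (genD n)) : Prop :=
  (exists w' : word (gen2 n), @RG n w' /\ w = map (fun p => (inl p.1, p.2)) w')
  \/ (exists i : 'I_n, w = [:: (inr i, false); (inr i, false)])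
  \/ (exists i j : 'I_n,
        w = rel_of [:: (inr i, false); (inr j, false)]
                   [:: (inr j, false); (inr i, false)])
  \/ (exists (i j : 'I_n) (g : gen2 n),
        [/\ i != j, val g = [set i; j] &
            w = rel_of [:: (inr i, false); (inr j, false); (inl g, false);
                           (inr j, false); (inr i, false)] [:: (inl g, false)]])
  \/ (exists (i j k : 'I_n) (g : gen2 n),
        [/\ uniq [:: i; j; k], val g = [set i; j] &
            w = rel_of [:: (inl g, false); (inr k, false)]
                       [:: (inr k, false); (inl g, false)]]).

Definition gen_letter (N : nat) (S : {set 'I_N}) (b : bool) : word (gen2 N) :=
  if @insub _ (fun S : {set 'I_N} => #|S| == 2) (gen2 N) S is Some g
  then [:: (g, b)] else [::].

Definition kappa_letter (n : nat) (p : genD n * bool) : word (gen2 n.+1) :=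
  match p.1 with
  | inl g => gen_letter [set widen_ord (leqnSn n) x | x in val g] p.2
  | inr i => gen_letter [set widen_ord (leqnSn n) i; ord_max] p.2
  end.

Definition kappa_word (n : nat) (w : word (genD n)) : word (gen2 n.+1) :=
  flatten (map (@kappa_letter n) w).

(* Send tau_i to a_{i(n+1)} and check that every defining relation of
   G_{n,D}^2 holds in Q.  The relations among the a_{ij}, tau_i^2 = 1 and
   a_{ij} tau_k = tau_k a_{ij} become relations of G_{n+1}^2 (the last one with
   n+1 as fourth index), and tau_i tau_j = tau_j tau_i becomes a generator of N.
   For tau_i tau_j a_{ij} tau_j tau_i = a_{ij}, write t_i = a_{i(n+1)}: the
   tetrahedron relation for i, j, n+1 gives a_{ij} t_i t_j = t_j t_i a_{ij}, so
   modulo N, t_i t_j a_{ij} t_j t_i = t_j t_i a_{ij} t_j t_i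
   = a_{ij} t_i t_j t_j t_i = a_{ij}. *)
From mathcomp Require Import all_boot.
Set Implicit Arguments. Unset Strict Implicit. Unset Printing Implicit Defensive.

Section WordEquality.
Variables (X : Type) (R : word X -> Prop).

Lemma weq_congr a b u v : weq R a b -> weq R (u ++ a ++ v) (u ++ b ++ v).
Proof.
elim=> {a b} [w | w1 w2 _ IH | w1 w2 w3 _ IH1 _ IH2 | u0 x b v0 | u0 r v0 Rr].
- exact: weq_refl.
- exact: weq_sym.
- exact: weq_trans IH1 IH2.
- by have := weq_free R (u ++ u0) x b (v0 ++ v); rewrite -!catA.
- by have := weq_rel (u ++ u0) (v0 ++ v) Rr; rewrite -!catA.
Qed.

Lemma weq_cat a b c d : weq R a b -> weq R c d -> weq R (a ++ c) (b ++ d).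
Proof.
move=> ab cd; apply: (weq_trans (w2 := b ++ c)).
  by have := weq_congr [::] c ab.
by have := weq_congr b [::] cd; rewrite !cats0.
Qed.

Lemma weq_relator r : R r -> weq R r [::].
Proof. by move=> Rr; have := weq_rel [::] [::] Rr; rewrite cats0. Qed.

Lemma inv_word_cons (x : X) b w :
  inv_word ((x, b) :: w) = inv_word w ++ [:: (x, ~~ b)].
Proof. by rewrite /inv_word /= rev_cons cats1. Qed.

Lemma inv_wordK : involutive (@inv_word X).
Proof.
by move=> w; rewrite /inv_word map_rev revK -map_comp; elim: w => //= [[x b] w] ->; rewrite negbK.
Qed.

Lemma weq_mulV w : weq R (w ++ inv_word w) [::].
Proof.
elim: w => [|[x b] w IH]; first exact: weq_refl.
rewrite inv_word_cons; apply: (weq_trans (w2 := [:: (x, b)] ++ [::] ++ [:: (x, ~~ b)])).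
  by have := weq_congr [:: (x, b)] [:: (x, ~~ b)] IH; rewrite /= -catA.
exact: (weq_free R [::] x b [::]).
Qed.

Lemma weq_rel_of l r : weq R l r -> weq R (rel_of l r) [::].
Proof. by move=> lr; apply: weq_trans (weq_mulV r); apply: weq_cat lr (weq_refl _ _). Qed.

Lemma relator_weq l r : R (rel_of l r) -> weq R l r.
Proof.
move=> Rlr; apply: (weq_trans (w2 := rel_of l r ++ r)).
  have := weq_cat (weq_refl R l) (weq_sym (weq_mulV (inv_word r))).
  by rewrite inv_wordK cats0 /rel_of catA.
by have := weq_cat (weq_relator Rlr) (weq_refl R r).
Qed.

End WordEquality.

Definition map_word (X Y : Type) (f : X -> Y) (w : word X) : word Y :=
  map (fun p => (f p.1, p.2)) w.

Section MapWord.
Variables (X Y : Type) (f : X -> Y).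

Lemma map_word_cat u v : map_word f (u ++ v) = map_word f u ++ map_word f v.
Proof. exact: map_cat. Qed.

Lemma map_word_rel_of l r :
  map_word f (rel_of l r) = rel_of (map_word f l) (map_word f r).
Proof. by rewrite /map_word /rel_of /inv_word map_cat map_rev -!map_comp. Qed.

Lemma map_word_comp (Z : Type) (g : Y -> Z) w :
  map_word g (map_word f w) = map_word (g \o f) w.
Proof. by rewrite /map_word -map_comp. Qed.

Lemma weq_map_word (R : word X -> Prop) (S : word Y -> Prop) w1 w2 :
  (forall r, R r -> weq S (map_word f r) [::]) ->
  weq R w1 w2 -> weq S (map_word f w1) (map_word f w2).
Proof.
move=> fR; elim=> {w1 w2} [w | w1 w2 _ IH | w1 w2 w3 _ IH1 _ IH2 | u x b v | u r v Rr].
- exact: weq_refl.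
- exact: weq_sym.
- exact: weq_trans IH1 IH2.
- by rewrite !map_word_cat; apply: weq_free.
- by rewrite !map_word_cat; exact: weq_congr (fR r Rr).
Qed.

End MapWord.

Section Gen2Map.
Variables (m n : nat) (f : 'I_n -> 'I_m).
Hypothesis f_inj : injective f.

Lemma card_imset_gen2 (g : gen2 n) : #|f @: val g| == 2.
Proof. by rewrite card_imset //; exact: (valP g). Qed.

Definition gen2_map (g : gen2 n) : gen2 m := Sub (f @: val g) (card_imset_gen2 g).

Lemma val_gen2_map g i j : val g = [set i; j] -> val (gen2_map g) = [set f i; f j].
Proof. by move=> gij; rewrite /= gij imsetU1 imset_set1. Qed.

Lemma RG_map_word w : RG w -> RG (map_word gen2_map w).
Proof.
have uniq_f s : uniq s -> uniq (map f s) by rewrite (map_inj_uniq f_inj).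
case=> [[g ->] | [[i [j [k [l [g [h [uijkl gij hkl ->]]]]]]] |
                 [i [j [k [g1 [g2 [g3 [uijk g1ij g2ik g3jk ->]]]]]]]]].
- by left; exists (gen2_map g).
- right; left; rewrite map_word_rel_of.
  exists (f i), (f j), (f k), (f l), (gen2_map g), (gen2_map h).
  by split; [exact: (uniq_f [:: i; j; k; l]) | exact: val_gen2_map .. | by []].
- right; right; rewrite map_word_rel_of.
  exists (f i), (f j), (f k), (gen2_map g1), (gen2_map g2), (gen2_map g3).
  by split; [exact: (uniq_f [:: i; j; k]) | exact: val_gen2_map .. | by []].
Qed.

End Gen2Map.

Lemma gen_letterE N (S : {set 'I_N}) (S2 : #|S| == 2) b :
  gen_letter S b = [:: (Sub S S2 : gen2 N, b)].
Proof. by rewrite /gen_letter insubT. Qed.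

Section Kappa.
Variable n : nat.

Definition wid (i : 'I_n) : 'I_n.+1 := widen_ord (leqnSn n) i.

Lemma wid_inj : injective wid.
Proof. by move=> i j eq_ij; apply/val_inj; exact: (congr1 val eq_ij). Qed.

Lemma wid_neq_max i : (wid i == ord_max) = false.
Proof. by apply/negbTE; rewrite -(inj_eq val_inj) /= neq_ltn ltn_ord. Qed.

Lemma card_tau (i : 'I_n) : #|[set wid i; ord_max]| == 2.
Proof. by rewrite cards2 eq_sym wid_neq_max. Qed.

Definition tau (i : 'I_n) : gen2 n.+1 := Sub [set wid i; ord_max] (card_tau i).

Definition kappa_gen (x : genD n) : gen2 n.+1 :=
  match x with inl g => gen2_map wid_inj g | inr i => tau i end.

Lemma kappa_letterE p : kappa_letter p = [:: (kappa_gen p.1, p.2)].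
Proof.
case: p => [[g|i] b]; rewrite /kappa_letter /=.
- exact: (gen_letterE (card_imset_gen2 wid_inj g)).
- exact: (gen_letterE (card_tau i)).
Qed.

Lemma kappa_wordE w : kappa_word w = map_word kappa_gen w.
Proof. by elim: w => //= p w IH; rewrite /kappa_word /= -/(kappa_word w) IH kappa_letterE. Qed.

Notation Q := (@RQ n).
Notation "[ x ; .. ; y ]" := ((x, false) :: .. [:: (y, false)] ..).

Lemma Q_sqr (g : gen2 n.+1) : weq Q [g; g] [::].
Proof. by apply: weq_relator; left; left; exists g. Qed.

Lemma Q_tau_comm i j : weq Q [tau i; tau j] [tau j; tau i].
Proof. by apply: relator_weq; right; exists i, j, (tau i), (tau j). Qed.

Lemma Q_tetrahedron i j (g : gen2 n) : i != j -> val g = [set i; j] ->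
  weq Q [kappa_gen (inl g); tau i; tau j] [tau j; tau i; kappa_gen (inl g)].
Proof.
move=> ij gij; apply: relator_weq; left; right; right.
exists (wid i), (wid j), ord_max, (kappa_gen (inl g)), (tau i), (tau j); split => //.
- by rewrite /= !inE (inj_eq wid_inj) !wid_neq_max orbF ij.
- exact: val_gen2_map.
Qed.

Lemma Q_tau_conj i j (g : gen2 n) : i != j -> val g = [set i; j] ->
  weq Q [tau i; tau j; kappa_gen (inl g); tau j; tau i] [kappa_gen (inl g)].
Proof.
move=> ij gij; set a := kappa_gen (inl g).
apply: (weq_trans (w2 := [tau j; tau i] ++ [a; tau j; tau i])).
  exact: weq_cat (Q_tau_comm i j) (weq_refl _ _).
apply: (weq_trans (w2 := [a; tau i; tau j] ++ [tau j; tau i])).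
  exact: weq_cat (weq_sym (Q_tetrahedron ij gij)) (weq_refl _ _).
apply: (weq_trans (w2 := [a; tau i] ++ [::] ++ [tau i])).
  exact: weq_congr [a; tau i] [tau i] (Q_sqr (tau j)).
exact: weq_congr [a] [::] (Q_sqr (tau i)).
Qed.

Lemma kappa_relator r : RGD r -> weq Q (map_word kappa_gen r) [::].
Proof.
case=> [[w [Gw ->]] | [[i ->] | [[i [j ->]] | [[i [j [g [ij gij ->]]]] |
        [i [j [k [g [uijk gij ->]]]]]]]]].
- rewrite map_word_comp; apply: weq_relator; left.
  exact: (RG_map_word wid_inj Gw).
- exact: Q_sqr.
- by rewrite map_word_rel_of; apply: weq_rel_of; apply: Q_tau_comm.
- by rewrite map_word_rel_of; apply: weq_rel_of; apply: Q_tau_conj.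
- rewrite map_word_rel_of; apply: weq_relator; left; right; left.
  exists (wid i), (wid j), (wid k), ord_max, (kappa_gen (inl g)), (tau k); split => //.
  + by move: uijk; rewrite /= !inE !(inj_eq wid_inj) !wid_neq_max !orbF.
  + exact: val_gen2_map.
Qed.

End Kappa.

Theorem mainTheorem7 (n : nat) (hn : 2 < n) (w1 w2 : word (genD n)) :
  weq (@RGD n) w1 w2 -> weq (@RQ n) (kappa_word w1) (kappa_word w2).
Proof.
rewrite !kappa_wordE; apply: weq_map_word.
exact: kappa_relator.
Qed.
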